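(* Let $\lambda$ be a partition with $n$ parts and let $\beta \in U_\lambda(n)$. If $\beta \in UGC_\lambda(n) \cap UBP_\lambda(n)$, then the terminal pair $(\lambda,\beta)$ is nonpermutable.
   Context: Fix an integer $n \geq 1$ and write $[k] = \{1,\dots,k\}$. A partition is $\lambda = (\lambda_1,\dots,\lambda_n)$ with $\lambda_1 \geq \dots \geq \lambda_n \geq 0$ integers. Let $R_\lambda \subseteq [n-1]$ be the set of $q \in [n-1]$ with $\lambda_q > \lambda_{q+1}$; write its elements $q_1 < \dots < q_r$, and set $q_0 := 0$, $q_{r+1} := n$. For $h \in [r+1]$ the $h$-th carrel is the index interval $\{q_{h-1}+1,\dots,q_h\}$. A $\lambda$-tuple is an $n$-tuple $\beta$ with entries in $[n]$, considered with this carrel structure; it is upper if $\beta_i \geq i$ for all $i$. $U_\lambda(n)$ is the set of upper $\lambda$-tuples. Critical indices: for $\beta \in U_\lambda(n)$ and $h \in [r+1]$, set $x_1 := q_h$; given $x_{u-1}$, if some index $x$ with $q_{h-1} < x < x_{u-1}$ satisfies $\beta_{x_{u-1}} - \beta_x > x_{u-1} - x$, let $x_u$ be the largest such $x$, otherwise stop. The $x_u$ are the critical indices of $\beta$ in carrel $h$; the pairs $(x_u,\beta_{x_u})$ form its critical list. For $i \in [n]$ let $x(i)$ be the smallest critical index in the carrel of $i$ with $x(i) \geq i$. The $\lambda$-platform is $\Xi_\lambda(\beta) := \xi$ with $\xi_i := \beta_{x(i)}$. The critical list is a flag critical list if for every $h \in [r]$, $\beta_{q_h} \leq \beta_k$ where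 $k$ is the smallest critical index of $\beta$ in carrel $h+1$. $UGC_\lambda(n)$ is the set of $\beta \in U_\lambda(n)$ with flag critical list; $UBP_\lambda(n)$ is the set of $\beta \in U_\lambda(n)$ with $\beta_i \leq \Xi_\lambda(\beta)_i$ for all $i$. Lattice paths: lattice points are integer pairs $(a,b)$ with $a \geq 0$, $b \geq 1$. A lattice path is a sequence of lattice points each consecutive step of which is $(a,b) \to (a+1,b)$ or $(a,b) \to (a,b+1)$. An $n$-path is $(\Lambda_1,\dots,\Lambda_n)$ with $\Lambda_m$ a lattice path starting at $(n-m,m)$. The terminals of $(\lambda,\beta)$ are $P_m := (\lambda_m + n - m, \beta_m)$, $m \in [n]$. For a permutation $\pi$ of $[n]$, $\mathcal{LD}_\lambda(\beta;\pi)$ is the set of $n$-paths with $\Lambda_m$ ending at $P_{\pi_m}$ for every $m$ and no two distinct components sharing a lattice point. The pair $(\lambda,\beta)$ is nonpermutable if $\mathcal{LD}_\lambda(\beta;\pi) = \emptyset$ for every permutation $\pi \neq (1,\dots,n)$. *)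

(* Conventions: lam, beta : nat -> nat are 1-indexed
   (only the values at 1..n matter). Permutations of [n] are {perm 'I_n},
   with 'I_n index i standing for i+1. *)
From mathcomp Require Import all_boot all_order.
From mathcomp Require Import all_fingroup.
Set Implicit Arguments. Unset Strict Implicit. Unset Printing Implicit Defensive.

Definition is_partition (n : nat) (lam : nat -> nat) : Prop :=
  forall i, 1 <= i -> i < n -> lam i.+1 <= lam i.

Definition inR (n : nat) (lam : nat -> nat) (q : nat) : bool :=
  (1 <= q) && (q < n) && (lam q.+1 < lam q).

Definition carrel (n : nat) (lam : nat -> nat) (a b : nat) : Prop :=
  [/\ a = 0 \/ inR n lam a, b = n \/ inR n lam b, a < b
    & forall q, a < q -> q < b -> ~~ inR n lam q].

(* beta_y - beta_x > y - x  (for x < y), written in nat without subtraction *)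
Definition crit_cond (beta : nat -> nat) (y x : nat) : bool :=
  beta x + y < beta y + x.

Inductive critical (beta : nat -> nat) (a b : nat) : nat -> Prop :=
| crit_top : critical beta a b b
| crit_step y x : critical beta a b y -> a < x -> x < y -> crit_cond beta y x ->
    (forall z, x < z -> z < y -> ~~ crit_cond beta y z) ->
    critical beta a b x.

Definition min_crit (beta : nat -> nat) (a b i x : nat) : Prop :=
  [/\ critical beta a b x, i <= x
    & forall y, critical beta a b y -> i <= y -> x <= y].

Definition upper_tuple (n : nat) (beta : nat -> nat) : Prop :=
  forall i, 1 <= i <= n -> (1 <= beta i <= n) /\ i <= beta i.

Definition flag_critical (n : nat) (lam beta : nat -> nat) : Prop :=
  forall q b k, inR n lam q -> carrel n lam q b -> min_crit beta q b q.+1 k ->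
    beta q <= beta k.

Definition below_platform (n : nat) (lam beta : nat -> nat) : Prop :=
  forall i a b x, 1 <= i <= n -> carrel n lam a b -> a < i <= b ->
    min_crit beta a b i x -> beta i <= beta x.

Definition lattice_step (p q : nat * nat) : bool :=
  (q == (p.1.+1, p.2)) || (q == (p.1, p.2.+1)).

Definition lattice_path (s : seq (nat * nat)) : bool :=
  [&& s != [::], all (fun p => 0 < p.2) s & sorted lattice_step s].

(* L : 'I_n -> paths, component i stands for Lambda_{i+1};
   membership in LD_lam(beta; pi) *)
Definition in_LD (n : nat) (lam beta : nat -> nat) (pi : {perm 'I_n})
    (L : 'I_n -> seq (nat * nat)) : Prop :=
  [/\ forall i : 'I_n, lattice_path (L i),
      forall i : 'I_n, head (0, 0) (L i) = (n - i.+1, i.+1),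
      forall i : 'I_n, last (0, 0) (L i) =
        (lam (pi i).+1 + (n - (pi i).+1), beta (pi i).+1)
    & forall i j : 'I_n, i != j -> forall p, p \in L i -> p \notin L j].

Definition nonpermutable (n : nat) (lam beta : nat -> nat) : Prop :=
  forall pi : {perm 'I_n}, pi != 1%g -> ~ exists L, in_LD lam beta pi L.

From mathcomp Require Import all_boot all_order all_fingroup.
From mathcomp Require Import zify.
From Stdlib Require Import ClassicalEpsilon.
Set Implicit Arguments. Unset Strict Implicit. Unset Printing Implicit Defensive.

(* Suppose some permutation pi <> id admits disjoint paths and let k be the
   largest index it moves, so that pi k < k.  All paths start on the diagonal
   x + y = n and advance one diagonal per step, and disjointness keeps them
   strictly ordered from right to left at every step.  Hence every terminal
   P_m with pi k < m <= k is reached by a path right of path k: it ends earlier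
   and lower, so P_m lies below P_(pi k) both in level x + y and in height.
   Likewise, if a later, fixed terminal P_t has minimal level among
   P_k, ..., P_t, the paths k, ..., t squeeze path k at least t - k to the
   right of P_t while it is still left of P_k.
   On the other hand, writing a for the terminal index pi k, the platform
   condition (or the flag condition, when a ends its carrel) produces a
   critical index t > a with beta_a <= beta_t and minimal level from a to t.
   For t <= k this contradicts the height bound; for t > k the indices k and t
   share a carrel, where terminal abscissae drop by exactly one per index,
   contradicting the squeeze. *)

Lemma classical_ex_minn (P : nat -> Prop) m :
  P m -> exists2 x, P x & forall y, P y -> x <= y.
Proof.
move=> Pm; pose p y : bool := excluded_middle_informative (P y).
have pP y : reflect (P y) (p y) by rewrite /p; case: excluded_middle_informative; constructor.
have [x /pP Px x_min] := ex_minnP (ex_intro p m (introT (pP m) Pm)).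
by exists x => // y /pP /x_min.
Qed.

(* P_m = (terminal_x m, beta m).  A lattice step raises x + y by one, so a
   path from the diagonal x + y = n to P_m has terminal_level m - n steps. *)
Definition terminal_x (n : nat) (lam : nat -> nat) (m : nat) := lam m + (n - m).

Definition terminal_level (n : nat) (lam beta : nat -> nat) (m : nat) :=
  terminal_x n lam m + beta m.

Section Carrels.
Variables (n : nat) (lam : nat -> nat).
Hypothesis lam_partition : is_partition n lam.
Local Notation xcoord := (terminal_x n lam).

Lemma partition_antitone i j : 0 < i -> i <= j <= n -> lam j <= lam i.
Proof.
move=> i_gt0 /andP[le_ij le_jn].
apply: (@homo_leq_in _ [pred m | 0 < m <= n] lam (fun x y => y <= x)) => //=.
- by move=> y x z le_yx le_zy; exact: leq_trans le_zy le_yx.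
- by move=> x y; rewrite !inE => /andP[x_gt0 _] /andP[_ le_yn] k /andP[? ?]; rewrite inE; lia.
- by move=> r; rewrite !inE => /andP[r_gt0 _] /andP[_ lt_rn]; exact: lam_partition.
- by rewrite inE i_gt0; lia.
- by rewrite inE; lia.
Qed.

Lemma terminal_x_decr i j : 0 < i -> i < j <= n -> xcoord j < xcoord i.
Proof.
move=> i_gt0 lt_ij; have : lam j <= lam i by apply: partition_antitone; lia.
rewrite /terminal_x; lia.
Qed.

Lemma carrel_le_n a q : carrel n lam a q -> q <= n.
Proof. by case=> _ [->|/andP[/andP[_ /ltnW]]]. Qed.

Lemma carrel_lam a q m : carrel n lam a q -> a < m <= q -> lam m = lam q.
Proof.
move=> cq /andP[lt_am le_mq]; have le_qn := carrel_le_n cq; case: cq => _ _ _ noR.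
have flat r : a < r -> r < q -> lam r.+1 = lam r.
  move=> lt_ar lt_rq; have := noR r lt_ar lt_rq; rewrite /inR.
  have := @lam_partition r; lia.
have const d : m + d <= q -> lam (m + d) = lam m.
  elim: d => [|d IH] le_q; first by rewrite addn0.
  by rewrite addnS flat ?IH //; lia.
by rewrite -(const (q - m)) ?subnKC.
Qed.

Lemma carrel_from a : a = 0 \/ inR n lam a -> a < n -> exists q, carrel n lam a q.
Proof.
move=> start_a lt_an; pose p q := (a < q) && ((q == n) || inR n lam q).
have pn : p n by rewrite /p lt_an eqxx.
have [q /andP[lt_aq end_q] q_min] := ex_minnP (ex_intro p n pn).
exists q; split=> //; first by case/orP: end_q => [/eqP|]; [left | right].
move=> r lt_ar lt_rq; apply/negP => Rr.
by have := q_min r; rewrite /p lt_ar Rr orbT => /(_ isT); lia.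
Qed.

Lemma carrel_of i : 0 < i <= n -> exists a q, carrel n lam a q /\ a < i <= q.
Proof.
move=> /andP[i_gt0 le_in]; pose p a := (a < i) && ((a == 0) || inR n lam a).
have p0 : p 0 by rewrite /p i_gt0.
have p_le_i a : p a -> a <= i by case/andP=> /ltnW.
have [a /andP[lt_ai start_a] a_max] := ex_maxnP (ex_intro p 0 p0) p_le_i.
have [q cq] : exists q, carrel n lam a q.
  by apply: carrel_from; [case/orP: start_a => [/eqP|]; [left | right] | lia].
exists a, q; split=> //; rewrite lt_ai leqNgt; apply/negP => lt_qi.
case: (cq) => _ [eq_qn | Rq] lt_aq _; first lia.
by have := a_max q; rewrite /p lt_qi Rq orbT => /(_ isT); lia.
Qed.

Lemma carrel_terminal_x a q k t : carrel n lam a q -> a < k <= t -> t <= q ->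
  xcoord t + (t - k) = xcoord k.
Proof.
move=> cq /andP[lt_ak le_kt] le_tq; have le_qn := carrel_le_n cq.
rewrite /terminal_x (carrel_lam cq (m := t)) ?(carrel_lam cq (m := k)); lia.
Qed.

End Carrels.

Section Critical.
Variables (n : nat) (lam beta : nat -> nat) (a q : nat).
Hypotheses (lam_partition : is_partition n lam) (cq : carrel n lam a q).
Local Notation level := (terminal_level n lam beta).

Lemma critical_le x : critical beta a q x -> x <= q.
Proof. by elim=> // y z _ le_yq _ lt_zy _ _; exact: ltnW (leq_trans lt_zy le_yq). Qed.

Lemma carrel_crit_cond x y : a < x -> x < y -> y <= q ->
  crit_cond beta y x = (level x < level y).
Proof.
move=> lt_ax lt_xy le_yq; have le_qn := carrel_le_n cq.
rewrite /crit_cond /terminal_level /terminal_x.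
rewrite (carrel_lam lam_partition cq (m := x)) ?(carrel_lam lam_partition cq (m := y));
  lia.
Qed.

Lemma critical_level_lt x m : critical beta a q x -> x < m <= q -> level x < level m.
Proof.
move=> crit_x; elim: crit_x m => [|y z crit_y IH lt_az lt_zy czy noc] m /andP[lt_zm le_mq].
  lia.
have le_yq := critical_le crit_y.
rewrite carrel_crit_cond // in czy.
case: (ltngtP m y) => [lt_my | lt_ym | ->] //.
- by have := noc m lt_zm lt_my; rewrite carrel_crit_cond //; lia.
- by have := IH m; rewrite lt_ym le_mq => /(_ isT); lia.
Qed.

Lemma min_crit_level_le i s m : min_crit beta a q i s -> a < i -> i <= m < s ->
  level s <= level m.
Proof.
move=> [crit_s le_is s_min] lt_ai /andP[le_im lt_ms]; have le_sq := critical_le crit_s.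
rewrite leqNgt; apply/negP => lt_m_s.
pose p x := [&& a < x, x < s & crit_cond beta s x].
have pm : p m by rewrite /p lt_ms carrel_crit_cond //= ?andbT; lia.
have p_le_s x : p x -> x <= s by case/and3P=> _ /ltnW.
have [x /and3P[lt_ax lt_xs csx] x_max] := ex_maxnP (ex_intro p m pm) p_le_s.
have crit_x : critical beta a q x.
  apply: (crit_step crit_s lt_ax lt_xs csx) => z lt_xz lt_zs; apply/negP => csz.
  by have := x_max z; rewrite /p lt_zs csz (ltn_trans lt_ax lt_xz) => /(_ isT); lia.
by have := x_max m pm; have := s_min x crit_x; lia.
Qed.

Lemma min_crit_exists i : i <= q -> exists s, min_crit beta a q i s.
Proof.
move=> le_iq.
pose P y := critical beta a q y /\ i <= y.
have [s [crit_s le_is] s_min] := classical_ex_minn (P := P) (conj (crit_top _ _ _) le_iq).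
by exists s; split=> // y crit_y le_iy; exact: s_min.
Qed.

End Critical.

(* The configuration forced by a permutation pi <> id with disjoint paths,
   with k the largest start moved by pi and a its terminal, both 1-based. *)
Definition permutation_witness (n : nat) (lam beta : nat -> nat) (a k : nat) : Prop :=
  [/\ 0 < a, a < k, k <= n,
      forall m, a < m <= k ->
        terminal_level n lam beta m < terminal_level n lam beta a /\ beta m < beta a
    & forall t, k < t <= n ->
        (forall m, k <= m < t -> terminal_level n lam beta t <= terminal_level n lam beta m) ->
        terminal_x n lam t + (t - k) < terminal_x n lam k].

Section NoWitness.
Variables (n : nat) (lam beta : nat -> nat) (a k : nat).
Hypotheses (lam_partition : is_partition n lam) (w : permutation_witness n lam beta a k).
Local Notation level := (terminal_level n lam beta).

Lemma witness_no_late_peak b q lo t : carrel n lam b q -> b < lo <= k -> a < t ->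
  lo <= t <= q -> beta a <= beta t -> (forall m, lo <= m < t -> level t <= level m) ->
  False.
Proof.
move=> cq /andP[lt_blo le_lok] lt_at /andP[le_lot le_tq] beta_at t_min.
have [_ _ le_kn dom gap] := w.
have le_qn := carrel_le_n cq.
case: (leqP t k) => [le_tk | lt_kt].
  have [_ lt_beta] : level t < level a /\ beta t < beta a by apply: dom; lia.
  lia.
have t_min' m : k <= m < t -> level t <= level m by case/andP=> *; apply: t_min; lia.
have := gap t ltac:(lia) t_min'.
by rewrite (carrel_terminal_x lam_partition cq (k := k)) ?ltnn //; lia.
Qed.

End NoWitness.

Lemma no_permutation_witness n lam beta a k : is_partition n lam ->
  flag_critical n lam beta -> below_platform n lam beta ->
  ~ permutation_witness n lam beta a k.
Proof.
move=> lam_partition flag platform w; have [a_gt0 lt_ak le_kn dom _] := w.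
have [b [q [cq /andP[lt_ba le_aq]]]] := @carrel_of n lam a ltac:(lia).
(* The first critical index s >= a has beta_a <= beta_s by the platform
   condition; if s = a ends its carrel, the flag condition does the same job
   in the next carrel. *)
have [s min_s] := min_crit_exists beta b le_aq.
have beta_as := platform a b q s ltac:(lia) cq ltac:(lia) min_s.
have [crit_s le_as _] := min_s.
have le_sq := critical_le crit_s.
move: le_as; rewrite leq_eqVlt => /predU1P[eq_as | lt_as]; last first.
  apply: (witness_no_late_peak lam_partition w cq (lo := a) (t := s)); try lia.
  by move=> m /andP[le_am lt_ms]; apply: (min_crit_level_le lam_partition cq min_s); lia.
subst s; case: (ltnP a q) => [lt_aq | le_qa].
  have := dom (minn k q) ltac:(lia).
  have := critical_level_lt lam_partition cq crit_s (m := minn k q) ltac:(lia); lia.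
have eq_qa : q = a by lia.
subst q; have Ra : inR n lam a by case: cq => _ [eq_an | //] _ _; lia.
have [q' cq'] := carrel_from (or_intror Ra) ltac:(lia).
have lt_aq' : a < q' by case: cq'.
have [k' min_k'] := min_crit_exists beta a lt_aq'.
have beta_ak' := flag a q' k' Ra cq' min_k'.
have [crit_k' le_ak' _] := min_k'.
have le_k'q' := critical_le crit_k'.
apply: (witness_no_late_peak lam_partition w cq' (lo := a.+1) (t := k')); try lia.
by move=> m /andP[le_am lt_mk']; apply: (min_crit_level_le lam_partition cq' min_k'); lia.
Qed.

Local Notation pt s u := (nth (0, 0) s u).

Definition coord_le (p p' : nat * nat) := (p.1 <= p'.1) && (p.2 <= p'.2).

Lemma lattice_step_x p p' : lattice_step p p' -> p.1 <= p'.1 <= p.1.+1.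
Proof. by case/orP=> /eqP -> /=; lia. Qed.

Lemma lattice_step_level p p' : lattice_step p p' -> p'.1 + p'.2 = (p.1 + p.2).+1.
Proof. by case/orP=> /eqP -> /=; lia. Qed.

Lemma lattice_path_level s u : sorted lattice_step s -> u < size s ->
  (pt s u).1 + (pt s u).2 = (pt s 0).1 + (pt s 0).2 + u.
Proof.
move=> /(sortedP (0, 0)) steps; elim: u => [|u IH] lt_us; first by rewrite addn0.
by rewrite (lattice_step_level (steps u lt_us)) IH ?addnS // ltnW.
Qed.

Lemma lattice_path_mono s u v : sorted lattice_step s -> u <= v -> v < size s ->
  coord_le (pt s u) (pt s v).
Proof.
move=> steps le_uv lt_vs; apply: (sorted_leq_nth (leT := coord_le)) => //.
- by move=> p2 p1 p3 /andP[? ?] /andP[? ?]; apply/andP; split; lia.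
- by move=> p; rewrite /coord_le !leqnn.
- by apply: sub_sorted steps => p p' /orP[] /eqP -> /=;
    rewrite /coord_le /= ?leqnSn ?leqnn.
- by rewrite inE (leq_ltn_trans le_uv lt_vs).
Qed.

Lemma lattice_paths_ordered s t u :
  sorted lattice_step s -> sorted lattice_step t ->
  (pt s 0).1 + (pt s 0).2 = (pt t 0).1 + (pt t 0).2 -> (pt s 0).1 < (pt t 0).1 ->
  (forall p, p \in s -> p \notin t) ->
  u < size s -> u < size t -> (pt s u).1 < (pt t u).1.
Proof.
move=> ss st start lt_start disj; elim: u => [//|u IH] lt_us lt_ut.
have lt_u := IH (ltnW lt_us) (ltnW lt_ut).
have /andP[_ step_s] := lattice_step_x ((sortedP (0, 0) ss) u lt_us).
have /andP[step_t _] := lattice_step_x ((sortedP (0, 0) st) u lt_ut).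
rewrite ltn_neqAle (leq_trans step_s (leq_trans lt_u step_t)) andbT.
apply/eqP => eq_x; have eq_pt : pt s u.+1 = pt t u.+1.
  apply: injective_projections => //.
  by have := lattice_path_level ss lt_us; have := lattice_path_level st lt_ut; lia.
by have := disj _ (mem_nth (0, 0) lt_us); rewrite eq_pt mem_nth.
Qed.

Section DisjointPaths.
Variables (n : nat) (lam beta : nat -> nat) (pi : {perm 'I_n}).
Variable L : 'I_n -> seq (nat * nat).
Hypotheses (lam_partition : is_partition n lam) (LD : in_LD lam beta pi L).
Local Notation len i := (size (L i)).-1.
Local Notation xcoord := (terminal_x n lam).
Local Notation level := (terminal_level n lam beta).

Lemma LD_sorted i : sorted lattice_step (L i).
Proof. by case: LD => /(_ i) /and3P[]. Qed.

Lemma LD_len_lt i : len i < size (L i).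
Proof. by case: LD => /(_ i) /and3P[]; case: (L i). Qed.

Lemma LD_head i : pt (L i) 0 = (n - i.+1, i.+1).
Proof. by case: LD => _ start _ _; rewrite nth0 start. Qed.

Lemma LD_last i : pt (L i) (len i) = (xcoord (pi i).+1, beta (pi i).+1).
Proof. by case: LD => _ _ stop _; rewrite nth_last stop. Qed.

Lemma LD_level i : level (pi i).+1 = n + len i.
Proof.
have := lattice_path_level (LD_sorted i) (LD_len_lt i).
rewrite LD_last LD_head /terminal_level /= => ->; have := ltn_ord i; lia.
Qed.

Lemma LD_ordered (i j : 'I_n) u : i < j -> u < size (L i) -> u < size (L j) ->
  (pt (L j) u).1 < (pt (L i) u).1.
Proof.
move=> lt_ij lt_ui lt_uj; have lt_jn := ltn_ord j.
apply: lattice_paths_ordered (LD_sorted j) (LD_sorted i) _ _ _ lt_uj lt_ui;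
  rewrite ?LD_head /=; try lia.
by case: LD => _ _ _ /(_ j i); rewrite neq_ltn lt_ij orbT => /(_ isT).
Qed.

Lemma LD_inversion (l k : 'I_n) : l < k -> pi k < pi l ->
  [/\ len l < len k, (pt (L k) (len l)).1 < xcoord (pi l).+1
    & beta (pi l).+1 < beta (pi k).+1].
Proof.
move=> lt_lk lt_pi.
have x_lt : xcoord (pi l).+1 < xcoord (pi k).+1.
  by apply: terminal_x_decr => //; have := ltn_ord (pi l); lia.
(* Path k stays left of path l but ends right of it: it must outlast path l. *)
have lt_len : len l < len k.
  rewrite ltnNge; apply/negP => le_len.
  have := LD_ordered lt_lk (leq_ltn_trans le_len (LD_len_lt l)) (LD_len_lt k).
  have /andP[+ _] := lattice_path_mono (LD_sorted l) le_len (LD_len_lt l).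
  by rewrite !LD_last /=; lia.
have ord_l := LD_ordered lt_lk (LD_len_lt l) (ltn_trans lt_len (LD_len_lt k)).
rewrite LD_last /= in ord_l; split=> //.
have /andP[_ le_y] := lattice_path_mono (LD_sorted k) (ltnW lt_len) (LD_len_lt k).
have := lattice_path_level (LD_sorted k) (ltn_trans lt_len (LD_len_lt k)).
have := LD_level l; rewrite LD_last LD_head /= /terminal_level in le_y *.
by have := ltn_ord k; lia.
Qed.

Lemma LD_spread (i j : 'I_n) u : i <= j ->
  (forall m : 'I_n, i <= m <= j -> u < size (L m)) ->
  (pt (L j) u).1 + (j - i) <= (pt (L i) u).1.
Proof.
move=> le_ij long.
suff spread d (m : 'I_n) :
    i <= m -> m + d = j -> (pt (L j) u).1 + d <= (pt (L m) u).1.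
  by apply: spread; lia.
elim: d m => [|d IH] m le_im eq_j.
  by rewrite addn0 (_ : j = m) //; apply: val_inj; rewrite /= -eq_j addn0.
have lt_m1n : m.+1 < n by have := ltn_ord j; lia.
have := IH (Ordinal lt_m1n) ltac:(simpl; lia) ltac:(simpl; lia).
have := @LD_ordered m (Ordinal lt_m1n) u (ltnSn m) (long m ltac:(lia))
  (long (Ordinal lt_m1n) ltac:(simpl; lia)).
lia.
Qed.

End DisjointPaths.

Section LastMoved.
Variables (n : nat) (lam beta : nat -> nat) (pi : {perm 'I_n}).
Variables (L : 'I_n -> seq (nat * nat)) (k : 'I_n).
Hypotheses (lam_partition : is_partition n lam) (LD : in_LD lam beta pi L).
Hypotheses (fixed_above : forall m : 'I_n, k < m -> pi m = m) (moved_down : pi k < k).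
Local Notation len i := (size (L i)).-1.
Local Notation xcoord := (terminal_x n lam).
Local Notation level := (terminal_level n lam beta).

Lemma preimage_lt (l : 'I_n) : pi k < pi l <= k -> l < k.
Proof.
case/andP=> lt_kl le_lk; case: (ltngtP l k) => // [lt_kl' | eq_lk].
  by move: le_lk; rewrite fixed_above // leqNgt lt_kl'.
by move: lt_kl; rewrite (val_inj eq_lk) ltnn.
Qed.

Lemma last_moved_dominates m : (pi k).+1 < m <= k.+1 ->
  level m < level (pi k).+1 /\ beta m < beta (pi k).+1.
Proof.
move=> /andP[lt_am le_mk]; have lt_mn : m.-1 < n by have := ltn_ord k; lia.
pose l := (pi^-1)%g (Ordinal lt_mn).
have pi_l : pi l = Ordinal lt_mn by rewrite permKV.
have lt_lk : l < k by apply: preimage_lt; rewrite pi_l /=; lia.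
have [lt_len _] := LD_inversion lam_partition LD lt_lk ltac:(rewrite pi_l /=; lia).
have := LD_level LD l; have := LD_level LD k; rewrite pi_l /= prednK; last by lia.
by move=> -> ->; split; lia.
Qed.

Lemma last_moved_gap t : k.+1 < t <= n ->
  (forall m, k.+1 <= m < t -> level t <= level m) ->
  xcoord t + (t - k.+1) < xcoord k.+1.
Proof.
move=> /andP[lt_kt le_tn] t_min; have lt_tn : t.-1 < n by lia.
pose j := Ordinal lt_tn.
have pi_j : pi j = j by apply: fixed_above => /=; lia.
pose l := (pi^-1)%g k.
have pi_l : pi l = k by rewrite permKV.
have lt_lk : l < k by apply: preimage_lt; rewrite pi_l moved_down /=.
have [lt_len x_lt _] := LD_inversion lam_partition LD lt_lk ltac:(by rewrite pi_l).
rewrite pi_l in x_lt.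
have le_len : len j <= len l.
  have := t_min k.+1 ltac:(lia).
  by have := LD_level LD l; have := LD_level LD j; rewrite pi_l pi_j /= prednK; lia.
have le_len_fixed (m : 'I_n) : k < m <= j -> len j <= len m.
  move=> /andP[lt_km le_mj]; case: (ltnP m j) => [lt_mj | le_jm].
    have := t_min m.+1 ltac:(simpl in lt_mj; lia).
    have := LD_level LD m; have := LD_level LD j.
    by rewrite pi_j (fixed_above lt_km) /= prednK; lia.
  by rewrite (_ : m = j) //; apply: ord_inj; lia.
have long (m : 'I_n) : k <= m <= j -> len j < size (L m).
  move=> /andP[le_km le_mj]; have := LD_len_lt LD m.
  case: (ltnP k m) => [lt_km | le_mk]; first by have := le_len_fixed m ltac:(lia); lia.
  by rewrite (_ : m = k); [lia | apply: ord_inj; lia].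
have := LD_spread LD (i := k) (j := j) (u := len j) ltac:(simpl; lia) long.
have /andP[x_mono _] :=
  lattice_path_mono (LD_sorted LD k) le_len (ltn_trans lt_len (LD_len_lt LD k)).
by rewrite (LD_last LD) pi_j /= prednK; lia.
Qed.

Lemma last_moved_witness : permutation_witness n lam beta (pi k).+1 k.+1.
Proof.
by split=> //; [exact: last_moved_dominates | exact: last_moved_gap].
Qed.

End LastMoved.

Lemma LD_permutation_witness n lam beta (pi : {perm 'I_n}) L :
  is_partition n lam -> in_LD lam beta pi L -> pi != 1%g ->
  exists a k, permutation_witness n lam beta a k.
Proof.
move=> lam_partition LD pi_n1.
have [i0 moved_i0] : exists i, pi i != i.
  apply/existsP; apply: contraR pi_n1 => /existsPn fixed.
  by apply/eqP/permP => i; rewrite perm1; apply/eqP/negPn/fixed.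
case: (@arg_maxnP _ i0 (fun i => pi i != i) val moved_i0) => k moved_k k_max.
have fixed_above (m : 'I_n) : k < m -> pi m = m.
  move=> lt_km; apply/eqP; apply: contraTT lt_km => moved_m.
  by have := k_max m moved_m; rewrite /= -leqNgt.
exists (pi k).+1, k.+1; apply: (last_moved_witness lam_partition LD fixed_above).
case: (ltngtP (pi k) k) => // [lt_kpk | eq_pk].
  by have /perm_inj eq_pk := fixed_above _ lt_kpk; rewrite eq_pk eqxx in moved_k.
by move: moved_k; rewrite (val_inj eq_pk) eqxx.
Qed.

Theorem proposition7p2 (n : nat) (lam beta : nat -> nat) :
  1 <= n -> is_partition n lam -> upper_tuple n beta ->
  flag_critical n lam beta -> below_platform n lam beta ->
  nonpermutable n lam beta.
Proof.
move=> _ lam_partition _ flag platform pi pi_n1 [L LD].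
have [a [k w]] := LD_permutation_witness lam_partition LD pi_n1.
exact: no_permutation_witness lam_partition flag platform w.
Qed.
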